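(* Let $X$ be a complex Banach space and $\{S_h\},\{T_h\}\in C_b((0,1],B(X))$ with $\lim_{h\to0}\|T_hS_h-S_hT_h\|=0$. Then for every $\lambda\in r(\{T_h\})$ and every $\{R(\lambda,T_h)\}\in C_b((0,1],B(X))$ with $\lim_{h\to0}\|(\lambda I-T_h)R(\lambda,T_h)-I\|=\lim_{h\to0}\|R(\lambda,T_h)(\lambda I-T_h)-I\|=0$, we have $\lim_{h\to0}\|R(\lambda,T_h)S_h-S_hR(\lambda,T_h)\|=0$.
   Context: $B(X)$ is the algebra of bounded linear operators on $X$. $C_b((0,1],B(X))$ denotes the set of families $\{T_h\}_{h\in(0,1]}\subset B(X)$ with $\sup_{h}\|T_h\|<\infty$. The resolvent set of $\{T_h\}$ is $r(\{T_h\})=\{\lambda\in\mathbb{C}:\ \exists\{R(\lambda,T_h)\}\in C_b((0,1],B(X))$ with $\lim_{h\to0}\|(\lambda I-T_h)R(\lambda,T_h)-I\|=\lim_{h\to0}\|R(\lambda,T_h)(\lambda I-T_h)-I\|=0\}$. *)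

From HB Require Import structures.
From mathcomp Require Import all_boot all_order all_algebra.
From mathcomp Require Import complex.
From mathcomp Require Import all_classical all_reals all_analysis.
Set Implicit Arguments. Unset Strict Implicit. Unset Printing Implicit Defensive.
Import Order.TTheory GRing.Theory Num.Theory.
Import numFieldNormedType.Exports.
Local Open Scope classical_set_scope.
Local Open Scope ring_scope.

(* Complex Banach spaces: X : completeNormedModType (complex R) for R : realType.
   The norm `|x| of X takes values in complex R (with zero imaginary part);
   nrm x is its real part, i.e. the real number ||x||. *)
Section OperatorDefs.
Variable R : realType.
Variable X : normedModType (complex R).

Definition nrm (x : X) : R := complex.Re `|x|.

Definition bounded_op (A : X -> X) : Prop :=
  exists M : R, forall x : X, nrm (A x) <= M * nrm x.

Definition opnorm (A : X -> X) : R :=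
  sup [set nrm (A x) | x in [set x : X | nrm x <= 1]].

Definition idop : X -> X := fun x => x.
Definition compop (A B : X -> X) : X -> X := fun x => A (B x).
Definition subop (A B : X -> X) : X -> X := fun x => A x - B x.
Definition shiftop (l : complex R) (A : X -> X) : X -> X := fun x => l *: x - A x.

(* C_b((0,1], B(X)): families {T_h}_{h in (0,1]} of bounded linear operators
   with sup_h ||T_h|| < oo.  (Values at h outside (0,1] are irrelevant.) *)
Definition Cb (T : R -> {linear X -> X}) : Prop :=
  (forall h : R, 0 < h <= 1 -> bounded_op (T h)) /\
  exists M : R, forall h : R, 0 < h <= 1 -> opnorm (T h) <= M.

Definition opnorm_to0 (A : R -> X -> X) : Prop :=
  opnorm (A h) @[h --> 0^'+] --> (0 : R).

Definition approx_resolvent (T : R -> {linear X -> X}) (l : complex R)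
    (Rl : R -> {linear X -> X}) : Prop :=
  Cb Rl /\
  opnorm_to0 (fun h => subop (compop (shiftop l (T h)) (Rl h)) idop) /\
  opnorm_to0 (fun h => subop (compop (Rl h) (shiftop l (T h))) idop).

Definition resolvent_set (T : R -> {linear X -> X}) : set (complex R) :=
  [set l | exists Rl : R -> {linear X -> X}, approx_resolvent T l Rl].

End OperatorDefs.

(* With E1 = (l - T_h) R_h - I and E2 = R_h (l - T_h) - I, one checks the identity
     R_h S_h - S_h R_h = R_h (T_h S_h - S_h T_h) R_h - R_h S_h E1 + E2 S_h R_h,
   so the operator norm of the left-hand side is bounded by
     M_R^2 ||T_h S_h - S_h T_h|| + M_R M_S (||E1|| + ||E2||),
   where M_R, M_S are uniform bounds of the two families; each term tends to 0. *)

From Pilot Require Import Defs.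
From HB Require Import structures.
From mathcomp Require Import all_boot all_order all_algebra.
From mathcomp Require Import complex.
From mathcomp Require Import all_classical all_reals all_analysis.
From mathcomp Require Import lra.
Set Implicit Arguments. Unset Strict Implicit. Unset Printing Implicit Defensive.
Import Order.TTheory GRing.Theory Num.Theory.
Import numFieldNormedType.Exports.
Local Open Scope classical_set_scope.
Local Open Scope ring_scope.

Section OperatorNorm.
Variables (R : realType) (X : normedModType (complex R)).
Local Notation nrm := (@nrm R X).
Local Notation opnorm := (@opnorm R X).
Local Notation bounded_op := (@bounded_op R X).

Lemma nrm_normrE (x : X) : `|x| = (nrm x)%:C%C.
Proof.
rewrite /nrm; have := ger0_Im (normr_ge0 x).
by case: `|x| => a b /= ->.
Qed.

Lemma nrm_ge0 (x : X) : 0 <= nrm x.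
Proof. by have := normr_ge0 x; rewrite nrm_normrE lecE /= => /andP[]. Qed.

Lemma nrm0 : nrm 0 = 0.
Proof. by rewrite /nrm normr0. Qed.

Lemma nrm_eq0 (x : X) : nrm x = 0 -> x = 0.
Proof. by move=> x0; apply/normr0_eq0; rewrite nrm_normrE x0. Qed.

Lemma nrmD (x y : X) : nrm (x + y) <= nrm x + nrm y.
Proof. by have := ler_normD x y; rewrite !nrm_normrE lecE /= => /andP[]. Qed.

Lemma nrmB (x y : X) : nrm (x - y) <= nrm x + nrm y.
Proof. by apply: le_trans (nrmD _ _) _; rewrite /nrm normrN. Qed.

Lemma nrmZ (c : complex R) (x : X) : nrm (c *: x) = complex.Re `|c| * nrm x.
Proof.
rewrite /nrm normrZ nrm_normrE; have := ger0_Im (normr_ge0 c).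
by case: `|c| => a b /= ->; rewrite mul0r subr0.
Qed.

Lemma opnorm_ge0 (A : X -> X) : 0 <= opnorm A.
Proof.
rewrite /Defs.opnorm; set E := [set _ | x in _].
have [supE|/sup_out ->//] := pselect (has_sup E).
have E0 : E (nrm (A 0)) by exists 0 => //=; rewrite nrm0.
exact: le_trans (nrm_ge0 (A 0)) (ub_le_sup supE.2 E0).
Qed.

Lemma opnorm_le (A : X -> X) (K : R) :
  0 <= K -> (forall x, nrm (A x) <= K * nrm x) -> opnorm A <= K.
Proof.
move=> K0 AK; apply: ge_sup; first by exists (nrm (A 0)), 0; rewrite //= nrm0.
move=> _ [x /= x1 <-]; apply: le_trans (AK x) _.
by rewrite -[leRHS]mulr1 ler_wpM2l.
Qed.

(* Evaluate the sup defining [opnorm A] at the unit vector x / ||x||. *)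
Lemma nrm_op_le (A : X -> X) : scalable A -> bounded_op A ->
  forall x, nrm (A x) <= opnorm A * nrm x.
Proof.
move=> sA [K AK] x; have [/nrm_eq0 ->|x0] := eqVneq (nrm x) 0.
  by rewrite -(scale0r (0 : X)) sA !scale0r nrm0 mulr0.
have xpos : 0 < nrm x by rewrite lt_def x0 nrm_ge0.
have nrm_inv_scale y : nrm (((nrm x)^-1)%:C%C *: y) = (nrm x)^-1 * nrm y.
  by rewrite nrmZ ger0_norm ?lecE /= ?eqxx ?invr_ge0 ?nrm_ge0.
have : nrm (A (((nrm x)^-1)%:C%C *: x)) <= opnorm A.
  apply: ub_le_sup; last by exists (((nrm x)^-1)%:C%C *: x); rewrite // /= nrm_inv_scale mulVf.
  exists `|K| => _ [y /= y1 <-]; apply: le_trans (AK y) _.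
  by have := nrm_ge0 y; have := ler_norm K; have := normr_ge0 K; nra.
by rewrite sA nrm_inv_scale ler_pdivrMl // mulrC.
Qed.

Lemma nrm_op3_le (A B C : X -> X) : scalable A -> scalable B -> scalable C ->
    bounded_op A -> bounded_op B -> bounded_op C ->
  forall x, nrm (A (B (C x))) <= opnorm A * opnorm B * opnorm C * nrm x.
Proof.
move=> sA sB sC bA bB bC x; apply: le_trans (nrm_op_le sA bA _) _.
rewrite -!mulrA ler_wpM2l ?opnorm_ge0 //; apply: le_trans (nrm_op_le sB bB _) _.
by rewrite ler_wpM2l ?opnorm_ge0 // nrm_op_le.
Qed.

Lemma scalable_compop (A B : X -> X) : scalable A -> scalable B -> scalable (compop A B).
Proof. by move=> sA sB c x; rewrite /compop sB sA. Qed.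

Lemma scalable_subop (A B : X -> X) : scalable A -> scalable B -> scalable (subop A B).
Proof. by move=> sA sB c x; rewrite /subop sA sB scalerBr. Qed.

Lemma scalable_idop : scalable (@idop R X).
Proof. by []. Qed.

Lemma scalable_shiftop l (A : X -> X) : scalable A -> scalable (shiftop l A).
Proof. by move=> sA c x; rewrite /shiftop sA scalerBr !scalerA mulrC. Qed.

Lemma bounded_op_compop (A B : X -> X) : scalable A -> scalable B ->
  bounded_op A -> bounded_op B -> bounded_op (compop A B).
Proof.
move=> sA sB bA bB; exists (opnorm A * opnorm B) => x.
rewrite /compop -mulrA; apply: le_trans (nrm_op_le sA bA _) _.
by rewrite ler_wpM2l ?opnorm_ge0 ?nrm_op_le.
Qed.

Lemma bounded_op_subop (A B : X -> X) :
  bounded_op A -> bounded_op B -> bounded_op (subop A B).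
Proof.
move=> [a Aa] [b Bb]; exists (a + b) => x.
by rewrite /subop mulrDl; apply: le_trans (nrmB _ _) _; apply: lerD.
Qed.

Lemma bounded_op_idop : bounded_op (@idop R X).
Proof. by exists 1 => x; rewrite mul1r. Qed.

Lemma bounded_op_shiftop l (A : X -> X) : bounded_op A -> bounded_op (shiftop l A).
Proof.
move=> [a Aa]; exists (complex.Re `|l| + a) => x.
by rewrite /shiftop mulrDl; apply: le_trans (nrmB _ _) _; rewrite nrmZ lerD.
Qed.

End OperatorNorm.

Lemma subr_regroup (V : zmodType) (a b p q L : V) :
  a - b = p - q + (- L + q + a) + (L - p - b).
Proof.
rewrite addrACA (addrC (- L + q)) -!addrA (addrCA L) (addrCA (- q) (- p)) addNKr.
by rewrite (addrCA L a) addNKr (addrCA (- q) a) addKr.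
Qed.

Section ApproximateResolvent.
Variables (R : realType) (X : normedModType (complex R)).
Local Notation opnorm := (@opnorm R X).

Lemma commutator_resolvent_identity (Rl S T : {linear X -> X}) l (x : X) :
  subop (compop Rl S) (compop S Rl) x =
  Rl (subop (compop T S) (compop S T) (Rl x))
  - Rl (S (subop (compop (shiftop l T) Rl) (@idop R X) x))
  + subop (compop Rl (shiftop l T)) (@idop R X) (S (Rl x)).
Proof.
rewrite /subop /compop /shiftop /idop !linearB !linearZ /=.
by rewrite scalerN !opprK; apply: subr_regroup.
Qed.

Lemma opnorm_resolvent_commutator_le (Rl S T : {linear X -> X}) l (MR MS : R) :
    bounded_op Rl -> bounded_op S -> bounded_op T ->
    opnorm Rl <= MR -> opnorm S <= MS ->
  opnorm (subop (compop Rl S) (compop S Rl)) <=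
    MR * opnorm (subop (compop T S) (compop S T)) * MR
    + MR * MS * opnorm (subop (compop (shiftop l T) Rl) (@idop R X))
    + opnorm (subop (compop Rl (shiftop l T)) (@idop R X)) * MS * MR.
Proof.
move=> bR bS bT RMR SMS.
set C := subop (compop T S) _; set E1 := subop (compop _ Rl) _.
set E2 := subop (compop Rl (shiftop l T)) _.
have sR := linearZZ Rl; have sS := linearZZ S; have sT := linearZZ T.
have sC : scalable C := scalable_subop (scalable_compop sT sS) (scalable_compop sS sT).
have sE1 : scalable E1 :=
  scalable_subop (scalable_compop (scalable_shiftop l sT) sR) (@scalable_idop R X).
have sE2 : scalable E2 :=
  scalable_subop (scalable_compop sR (scalable_shiftop l sT)) (@scalable_idop R X).
have bC : bounded_op C :=
  bounded_op_subop (bounded_op_compop sT sS bT bS) (bounded_op_compop sS sT bS bT).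
have bE1 : bounded_op E1 := bounded_op_subop
  (bounded_op_compop (scalable_shiftop l sT) sR (bounded_op_shiftop l bT) bR)
  (@bounded_op_idop R X).
have bE2 : bounded_op E2 := bounded_op_subop
  (bounded_op_compop sR (scalable_shiftop l sT) bR (bounded_op_shiftop l bT))
  (@bounded_op_idop R X).
pose K := opnorm Rl * opnorm C * opnorm Rl + opnorm Rl * opnorm S * opnorm E1
  + opnorm E2 * opnorm S * opnorm Rl.
have K0 : 0 <= K by rewrite /K !(addr_ge0, mulr_ge0) ?opnorm_ge0.
apply: le_trans (opnorm_le K0 _) _ => [x|].
  rewrite (commutator_resolvent_identity _ _ T l) -/C -/E1 -/E2 /K !mulrDl.
  apply: le_trans (nrmD _ _) _; apply: lerD; first apply: le_trans (nrmB _ _) _.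
  - by apply: lerD; apply: nrm_op3_le.
  - exact: nrm_op3_le.
by rewrite /K; do 2?apply: lerD; do 2?apply: ler_pM; rewrite ?mulr_ge0 ?opnorm_ge0.
Qed.

End ApproximateResolvent.

Lemma resolvent_bound_cvg0 (R : realType) (U : Type) (F : set_system U) {FF : Filter F}
    (MR MS : R) (c e1 e2 : U -> R) :
  c @ F --> 0 -> e1 @ F --> 0 -> e2 @ F --> 0 ->
  MR * c h * MR + MR * MS * e1 h + e2 h * MS * MR @[h --> F] --> (0 : R).
Proof.
move=> c0 e10 e20.
rewrite -[X in _ --> X](_ : MR * 0 * MR + MR * MS * 0 + 0 * MS * MR = 0).
  apply: cvgD; first apply: cvgD.
  - by apply: cvgMr_tmp; apply: cvgMl_tmp.
  - exact: cvgMl_tmp.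
  - by do 2!apply: cvgMr_tmp.
by rewrite !(mulr0, mul0r, addr0).
Qed.

Lemma near0_right_in_unit_interval (R : realType) :
  \forall h \near (0 : R)^'+, 0 < h <= 1.
Proof.
near=> h; apply/andP; split; near: h; first exact: nbhs_right_gt.
exact: nbhs_right_le ltr01.
Unshelve. all: end_near.
Qed.

(* The hypothesis [l \in resolvent_set T] is implied by [approx_resolvent T l Rl]. *)
Theorem proposition24 (R : realType) (X : completeNormedModType (complex R))
    (S T : R -> {linear X -> X}) :
  Cb S -> Cb T ->
  opnorm_to0 (fun h => subop (compop (T h) (S h)) (compop (S h) (T h))) ->
  forall l : complex R, l \in resolvent_set T ->
  forall Rl : R -> {linear X -> X}, approx_resolvent T l Rl ->
  opnorm_to0 (fun h => subop (compop (Rl h) (S h)) (compop (S h) (Rl h))).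
Proof.
move=> [bS [MS SMS]] [bT _] TS_to0 l _ Rl [[bR [MR RMR]] [E1_to0 E2_to0]].
apply: squeeze_cvgr (cvg_cst 0) (resolvent_bound_cvg0 MR MS TS_to0 E1_to0 E2_to0).
near=> h; have h01 : 0 < h <= 1 by near: h; exact: near0_right_in_unit_interval.
rewrite opnorm_ge0 /=.
exact: opnorm_resolvent_commutator_le (bR h h01) (bS h h01) (bT h h01) (RMR h h01) (SMS h h01).
Unshelve. all: end_near.
Qed.
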